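(* Let $(\mathcal{X},\rho,\nu)$ be a metric measure space where $\nu$ is a finite Borel measure. Suppose $\mathbb{X}=(X_n)_{n\ge0}$ is uniformly dominated by $\nu$ at rate $\epsilon(\delta)$. Then for any $\epsilon>0$ there exists a region $\mathcal{X}'\subset\mathcal{X}$ of bounded diameter such that, for any nearest neighbor process $(\tilde X_n)_{n\ge1}$, \[\limsup_{N\to\infty}\frac1N\sum_{n=1}^N\mathbb{1}\{X_n\notin\mathcal{X}'\text{ or }\tilde X_n\notin\mathcal{X}'\}<\epsilon\quad\text{almost surely.}\]
   Context: $\mathbb{X}_{<n}=\{X_0,\dots,X_{n-1}\}$; a nearest neighbor process is any $(\tilde X_n)_{n\ge1}$ with $\tilde X_n\in\arg\min_{x\in\mathbb{X}_{<n}}\rho(X_n,x)$. $\mathbb{X}$ is uniformly dominated by $\nu$ if for every $\epsilon>0$ there is $\delta>0$ such that every measurable $A$ with $\nu(A)<\delta$ satisfies $\sup_n\Pr(X_n\in A\mid\mathbb{X}_{<n})<\epsilon$ a.s.; it is uniformly dominated at rate $\epsilon(\cdot)$ if in addition, for every $\delta>0$ and measurable $A$ with $\nu(A)<\delta$, $\sup_n\Pr(X_n\in A\mid\mathbb{X}_{<n})<\epsilon(\delta)$ a.s. *)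

From HB Require Import structures.
From mathcomp Require Import all_boot all_order all_algebra.
From mathcomp Require Import all_classical all_reals all_analysis.
Set Implicit Arguments. Unset Strict Implicit. Unset Printing Implicit Defensive.
Import Order.TTheory GRing.Theory Num.Theory.
Local Open Scope classical_set_scope.
Local Open Scope ring_scope.

Section defs.
Context {R : realType}.

Definition is_metric {T : Type} (rho : T -> T -> R) : Prop :=
  (forall x y, 0 <= rho x y) /\ (forall x y, rho x y = 0 <-> x = y) /\
  (forall x y, rho x y = rho y x) /\
  (forall x y z, rho x z <= rho x y + rho y z).

Definition rho_open {T : Type} (rho : T -> T -> R) (U : set T) : Prop :=
  forall x, U x -> exists2 r : R, 0 < r & [set y | rho x y < r] `<=` U.

Definition bounded_diam {T : Type} (rho : T -> T -> R) (S : set T) : Prop :=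
  exists M : R, forall x y, S x -> S y -> rho x y <= M.

Definition past_sigma {d dO} {T : measurableType d} {O : measurableType dO}
  (X : nat -> O -> T) (n : nat) : set (set O) :=
  <<s [set B | exists i, (i < n)%N /\ exists2 A, measurable A & B = X i @^-1` A] >>.

(* g is a version of Pr(X_n \in A | X_0, ..., X_{n-1}) *)
Definition is_cond_prob {d dO} {T : measurableType d} {O : measurableType dO}
  (P : probability O R) (X : nat -> O -> T) (n : nat) (A : set T) (g : O -> R) : Prop :=
  (forall B : set R, measurable B -> past_sigma X n (g @^-1` B)) /\
  P.-integrable setT (EFin \o g) /\
  (forall B, past_sigma X n B ->
     P (X n @^-1` A `&` B) = (\int[P]_(w in B) (g w)%:E)%E).

Definition sup_cond_prob_lt {d dO} {T : measurableType d} {O : measurableType dO}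
  (P : probability O R) (X : nat -> O -> T) (A : set T) (c : R) : Prop :=
  exists g : nat -> O -> R, (forall n, is_cond_prob P X n A (g n)) /\
    {ae P, forall w, exists2 b : R, b < c & forall n, g n w <= b}.

Definition unif_dominated {d dO} {T : measurableType d} {O : measurableType dO}
  (P : probability O R) (X : nat -> O -> T) (nu : {measure set T -> \bar R}) : Prop :=
  forall eps : R, 0 < eps -> exists2 delta : R, 0 < delta &
    forall A, measurable A -> (nu A < delta%:E)%E -> sup_cond_prob_lt P X A eps.

Definition unif_dominated_at_rate {d dO} {T : measurableType d} {O : measurableType dO}
  (P : probability O R) (X : nat -> O -> T) (nu : {measure set T -> \bar R})
  (rate : R -> R) : Prop :=
  unif_dominated P X nu /\
  forall delta : R, 0 < delta ->
    forall A, measurable A -> (nu A < delta%:E)%E -> sup_cond_prob_lt P X A (rate delta).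

Definition nn_process {T O : Type} (rho : T -> T -> R) (X Xt : nat -> O -> T) : Prop :=
  forall n w, (0 < n)%N ->
    (exists2 i, (i < n)%N & Xt n w = X i w) /\
    (forall i, (i < n)%N -> rho (X n w) (Xt n w) <= rho (X n w) (X i w)).

End defs.

From HB Require Import structures.
From mathcomp Require Import all_boot all_order all_algebra.
From mathcomp Require Import all_classical all_reals all_analysis.
From mathcomp Require Import zify lra.
Import Order.TTheory GRing.Theory Num.Theory.
Local Open Scope classical_set_scope.
Local Open Scope ring_scope.

(* Fix a ball B = B(x0, K) whose complement has nu-measure below the delta that
   uniform domination attaches to a small c; then, given the past, each X_n leaves B
   with probability at most c.  The number of exits among the first N steps has
   exponential moment at most (1 + (e - 1) c)^N, so by Markov's inequality and
   Borel-Cantelli its frequency is eventually below a = eps / 3 almost surely.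
   Once some X_j lies in B, every later X_n in B has its nearest neighbour within
   2K of it, so both lie in X' = B(x0, 3K): the frequency of steps leaving X' is
   at most that of exits plus (j + 1) / N, eventually below 2a < eps. *)

Lemma geometric_nneseries_lt_pinfty {R : realType} (r : R) :
  0 <= r < 1 -> (\sum_(n <oo) (r ^+ n)%:E < +oo)%E.
Proof.
move=> /andP[r0 r1].
have r_lt1 : `|r| < 1 by rewrite ger0_norm.
suff -> : (\sum_(n <oo) (r ^+ n)%:E = (1 * (1 - r)^-1)%:E)%E by exact: ltry.
apply/cvg_lim => //.
have -> : (fun n => \sum_(0 <= k < n) (r ^+ k)%:E)%E = EFin \o series (geometric 1 r).
  apply/funext => n; rewrite /= sumEFin /series /=.
  by congr (_%:E); apply: eq_bigr => k _; rewrite mul1r.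
apply: cvg_EFin; first exact: nearW.
exact: cvg_geometric_series.
Qed.

Lemma limn_esup_le_near {R : realType} (u : (\bar R)^nat) (l : \bar R) :
  (\forall n \near \oo, u n <= l)%E -> (limn_esup u <= l)%E.
Proof.
move=> [N0 _ uN0]; rewrite limn_esup_lim; apply: lime_le; first exact: is_cvg_esups.
exists N0 => // n /= N0n; apply: ge_ereal_sup => _ [m /= nm <-].
exact/uN0/(leq_trans N0n).
Qed.

Lemma expR_mix_le {R : realType} (c x y : R) : 0 <= y -> y <= c * (x + y) ->
  x + expR 1 * y <= (1 + (expR 1 - 1) * c) * (x + y).
Proof.
move=> y0 yc; have e1 : 1 <= expR 1 :> R by rewrite ltW // expR_gt1.
have : 0 <= (expR 1 - 1) * (c * (x + y) - y) by apply: mulr_ge0; lra.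
nra.
Qed.

Section conditional_chernoff.
Context {R : realType} {dO : measure_display} {O : measurableType dO}.
Variables (P : probability O R) (G : nat -> set (set O)) (Y : nat -> set O) (c : R).
Hypothesis c_ge0 : 0 <= c.
Hypothesis past_measurable : forall n, <<s G n>> `<=` measurable.
Hypothesis past_mono : forall n m, (n <= m)%N -> <<s G n>> `<=` <<s G m>>.
Hypothesis Y_next : forall n, <<s G n.+1>> (Y n).
Hypothesis Y_cond : forall n B, <<s G n>> B -> (P (Y n `&` B) <= c%:E * P B)%E.

Let pr A := fine (P A).

Let prE A : measurable A -> P A = (pr A)%:E.
Proof. by move=> mA; rewrite /pr fineK// fin_num_measure. Qed.

Let pr_ge0 A : 0 <= pr A.
Proof. exact/fine_ge0/measure_ge0. Qed.

Let pr0 : pr set0 = 0.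
Proof. by rewrite /pr measure0. Qed.

Let pr_le A B : measurable A -> measurable B -> A `<=` B -> pr A <= pr B.
Proof. by move=> mA mB AB; rewrite -lee_fin -!prE// le_measure// inE. Qed.

Let prU A B : measurable A -> measurable B -> A `&` B = set0 ->
  pr (A `|` B) = pr A + pr B.
Proof.
move=> mA mB AB; apply/EFin_inj; rewrite EFinD -!prE// ?measureU//.
exact: measurableU.
Qed.

Let prDI A B : measurable A -> measurable B -> pr A = pr (A `\` B) + pr (A `&` B).
Proof.
move=> mA mB; apply/EFin_inj; rewrite EFinD -!prE//.
- exact: measureDI.
- exact: measurableI.
- exact: measurableD.
Qed.

Definition hits N w := (\sum_(n < N) (w \in Y n))%N.

Definition hits_level N k := [set w | hits N w = k].

Lemma hitsS N w : hits N.+1 w = (hits N w + (w \in Y N))%N.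
Proof. by rewrite /hits big_ord_recr. Qed.

Lemma hits_le N w : (hits N w <= N)%N.
Proof.
elim: N => [|N IH]; first by rewrite /hits big_ord0.
by rewrite hitsS -addn1 leq_add// leq_b1.
Qed.

Lemma hits_level0 k : hits_level 0 k = if k is 0 then setT else set0.
Proof. by apply/seteqP; split => w; rewrite /hits_level /= /hits big_ord0; case: k. Qed.

Lemma hits_levelS0 N : hits_level N.+1 0 = hits_level N 0 `\` Y N.
Proof.
apply/seteqP; split => w; rewrite /hits_level /= hitsS;
  case: (boolP (w \in Y N)); rewrite ?in_setE ?notin_setE => Yw; rewrite /= ?addn0 ?addn1.
- by [].
- by split.
- by case=> _ /(_ Yw).
- by case.
Qed.

Lemma hits_levelSS N k :
  hits_level N.+1 k.+1 = (hits_level N k.+1 `\` Y N) `|` (hits_level N k `&` Y N).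
Proof.
apply/seteqP; split => w; rewrite /hits_level /= hitsS;
  case: (boolP (w \in Y N)); rewrite ?in_setE ?notin_setE => Yw; rewrite /= ?addn0 ?addn1.
- by case=> ->; right.
- by move=> ->; left.
- by case=> [[_ /(_ Yw)] | [->]].
- by case=> [[]|[_ /Yw]].
Qed.

Lemma hits_level_past N k : <<s G N>> (hits_level N k).
Proof.
elim: N k => [|N IH] k.
  rewrite hits_level0; case: k => [|k]; last exact: sigma_algebra0.
  exact: (@measurableT _ (g_sigma_algebraType (G 0))).
pose GN := g_sigma_algebraType (G N.+1).
have IHS j : <<s G N.+1>> (hits_level N j) by exact: past_mono (leqnSn N) _ (IH j).
have YN : <<s G N.+1>> (Y N) := Y_next N.
case: k => [|k]; rewrite ?hits_levelS0 ?hits_levelSS.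
  exact: (@measurableD _ GN _ _ (IHS 0%N) YN).
apply: (@measurableU _ GN).
  exact: (@measurableD _ GN _ _ (IHS k.+1) YN).
exact: (@measurableI _ GN _ _ (IHS k) YN).
Qed.

Lemma hits_level_measurable N k : measurable (hits_level N k).
Proof. exact: past_measurable _ _ (hits_level_past N k). Qed.

Lemma hits_preimage_measurable N (Q : set nat) : measurable (hits N @^-1` Q).
Proof.
rewrite (_ : hits N @^-1` Q = \bigcup_(k in Q) hits_level N k).
  by apply: bigcup_measurable => k _; exact: hits_level_measurable.
by apply/seteqP; split => [w Qw|w [k Qk /= ->]] //; exists (hits N w).
Qed.


Lemma hits_level_Y_le N k : pr (hits_level N k `&` Y N) <= c * pr (hits_level N k).
Proof.
have mL := hits_level_measurable N k.
have mY : measurable (Y N) := past_measurable _ _ (Y_next N).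
rewrite -lee_fin EFinM -(prE _ mL) -(prE _ (measurableI _ _ mL mY)) setIC.
exact: Y_cond _ _ (hits_level_past N k).
Qed.

Let q := 1 + (expR 1 - 1) * c.

Let q_ge0 : 0 <= q.
Proof. by rewrite addr_ge0 // mulr_ge0 // subr_ge0 ltW // expR_gt1. Qed.

(* The exponential moment E[exp (hits N)], summed over the level sets of hits N. *)
Lemma hits_moment_le N L :
  \sum_(0 <= k < L) expR k%:R * pr (hits_level N k) <= q ^+ N.
Proof.
elim: N L => [|N IH] [|L]; try by rewrite big_geq// exprn_ge0.
  rewrite big_nat_recl// hits_level0 expR0 mul1r big1 ?addr0 ?expr0.
    by rewrite /pr probability_setT.
  by move=> k _; rewrite hits_level0 pr0 mulr0.
have mY : measurable (Y N) := past_measurable _ _ (Y_next N).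
have mL := hits_level_measurable N.
have split_level k : pr (hits_level N.+1 k.+1) =
    pr (hits_level N k.+1 `\` Y N) + pr (hits_level N k `&` Y N).
  rewrite hits_levelSS prU //; [exact: measurableD | exact: measurableI |].
  by apply/seteqP; split => w // [[_ /[swap] -[_]]].
rewrite big_nat_recl// hits_levelS0.
under eq_bigr do rewrite split_level mulrDr.
rewrite big_split /= addrA -(big_nat_recl L 0
  (fun k => expR k%:R * pr (hits_level N k `\` Y N)))//.
apply: (@le_trans _ _ (\sum_(0 <= k < L.+1) (expR k%:R * pr (hits_level N k `\` Y N)
    + expR k.+1%:R * pr (hits_level N k `&` Y N)))).
  by rewrite big_split /= lerD2l [leRHS]big_nat_recr//= lerDl mulr_ge0// expR_ge0.
rewrite exprS; apply: le_trans (ler_wpM2l q_ge0 (IH L.+1)); rewrite mulr_sumr.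
apply: ler_sum => k _.
rewrite (prDI _ _ (mL k) mY) -addn1 natrD expRD -mulrA -mulrDr mulrCA.
apply: ler_wpM2l; first exact: expR_ge0.
apply: expR_mix_le; first exact: pr_ge0.
by rewrite -prDI//; exact: hits_level_Y_le.
Qed.

Lemma hits_markov a N :
  expR (a * N%:R) * pr [set w | a * N%:R <= (hits N w)%:R] <=
  \sum_(0 <= k < N.+1) expR k%:R * pr (hits_level N k).
Proof.
set A := [set w | _ <= _].
have mA : measurable A := hits_preimage_measurable N [set k | a * N%:R <= k%:R].
suff : forall L, expR (a * N%:R) * pr (A `&` [set w | (hits N w < L)%N]) <=
    \sum_(0 <= k < L) expR k%:R * pr (hits_level N k).
  move/(_ N.+1); rewrite (_ : _ `&` _ = A)//.
  by apply/seteqP; split => [w []//|w Aw]; split; rewrite //= ltnS hits_le.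
elim => [|L IH].
  by rewrite big_geq// (_ : _ `&` _ = set0) ?pr0 ?mulr0//; apply/seteqP; split => w // [].
have -> : A `&` [set w | (hits N w < L.+1)%N] =
    (A `&` [set w | (hits N w < L)%N]) `|` (A `&` hits_level N L).
  apply/seteqP; split => [w [Aw]|w [[Aw lt]|[Aw /= eqL]]] /=.
  - by rewrite ltnS leq_eqVlt => /orP[/eqP|]; [right|left].
  - by split => //; exact: ltnW.
  - by rewrite eqL.
have disj : (A `&` [set w | (hits N w < L)%N]) `&` (A `&` hits_level N L) = set0.
  by apply/seteqP; split => w // [[_ /= lt] [_ /= eqL]]; move: lt; rewrite eqL ltnn.
have mlev := hits_level_measurable N L.
have mAL : measurable (A `&` hits_level N L) := measurableI _ _ mA mlev.
have mlt : measurable [set w | (hits N w < L)%N] :=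
  hits_preimage_measurable N [set k | (k < L)%N].
rewrite prU//; last exact: measurableI.
rewrite mulrDr big_nat_recr//= lerD//.
have [aNL|LaN] := leP (a * N%:R) L%:R.
  apply: ler_pM; rewrite ?expR_ge0 ?pr_ge0 ?ler_expR//.
  exact: pr_le mAL mlev (@subIsetr _ _ _).
rewrite (_ : _ `&` _ = set0) ?pr0 ?mulr0 ?mulr_ge0 ?expR_ge0 ?pr_ge0//.
by apply/seteqP; split => w // [Aw /= eqL]; move: Aw; rewrite /A /= eqL leNgt LaN.
Qed.

Lemma hits_tail_le a N :
  pr [set w | a * N%:R <= (hits N w)%:R] <= expR ((expR 1 - 1) * c - a) ^+ N.
Proof.
have := le_trans (hits_markov a N) (hits_moment_le N N.+1).
set p := pr _ => markov.
have -> : p = expR (- (a * N%:R)) * (expR (a * N%:R) * p).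
  by rewrite mulrA -expRD addNr expR0 mul1r.
apply: le_trans (ler_wpM2l (expR_ge0 _) markov) _.
rewrite -expRM_natr mulrBl expRD [leRHS]mulrC; apply: ler_wpM2l; first exact: expR_ge0.
rewrite expRM_natr; apply: lerXn2r; rewrite ?nnegrE ?expR_ge0//.
exact: expR_ge1Dx.
Qed.

Lemma hits_eventually_lt a : (expR 1 - 1) * c < a ->
  {ae P, forall w, \forall N \near \oo, (hits N w)%:R < a * N%:R}.
Proof.
move=> ca; set r := expR ((expR 1 - 1) * c - a).
have r01 : 0 <= r < 1 by rewrite expR_ge0 expR_lt1 subr_lt0.
pose F N := [set w | a * N%:R <= (hits N w)%:R].
have mF N : measurable (F N) := hits_preimage_measurable N [set k | a * N%:R <= k%:R].
exists (lim_sup_set F); split.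
- by apply: bigcapT_measurable => n; apply: bigcup_measurable => k _.
- apply: lim_sup_set_cvg0 => //.
  apply: (@le_lt_trans _ _ (\sum_(n <oo) (r ^+ n)%:E)%E); last exact: geometric_nneseries_lt_pinfty.
  apply: lee_nneseries => [n _ _|n _]; first exact: measure_ge0.
  apply: (@le_trans _ _ (pr (F n))%:E); first by rewrite -(prE _ (mF n)).
  by rewrite lee_fin hits_tail_le.
- move=> w /= nev n _; apply: contrapT => nF; apply: nev; exists n => // m /= nm.
  by rewrite ltNge; apply/negP => Fm; apply: nF; exists m.
Qed.

End conditional_chernoff.

Section past_sigma.
Context {d dO : measure_display} {T : measurableType d} {O : measurableType dO}.
Variable X : nat -> O -> T.

Lemma past_sigma_mono n m : (n <= m)%N -> past_sigma X n `<=` past_sigma X m.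
Proof.
move=> nm; apply: smallest_sub; first exact: smallest_sigma_algebra.
move=> _ [i [im [A mA ->]]]; apply: sub_gen_smallest.
by exists i; split; [exact: leq_trans im nm | exists A].
Qed.

Lemma past_sigma_preimage n A : measurable A -> past_sigma X n.+1 (X n @^-1` A).
Proof. by move=> mA; apply: sub_gen_smallest; exists n; split => //; exists A. Qed.

Lemma past_sigma_measurable n : (forall i, measurable_fun setT (X i)) ->
  past_sigma X n `<=` measurable.
Proof.
move=> mX; apply: smallest_sub; first exact: sigma_algebra_measurable.
by move=> _ [i [_ [A mA ->]]]; rewrite -[X i @^-1` A]setTI; exact: mX.
Qed.

End past_sigma.

Lemma sup_cond_prob_lt_le {R : realType} {d dO : measure_display}
    {T : measurableType d} {O : measurableType dO}
    {P : probability O R} {X : nat -> O -> T} {A : set T} {c : R} {n : nat} {B : set O} :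
  0 <= c -> sup_cond_prob_lt P X A c -> past_sigma X n B -> measurable B ->
  (P (X n @^-1` A `&` B) <= c%:E * P B)%E.
Proof.
move=> c0 [g [gcond [N0 [mN0 PN0 gN0]]]] pB mB.
have [_ [gint ->//]] := gcond n.
have mBN : measurable (B `\` N0) by exact: measurableD.
have gint_on D : measurable D -> P.-integrable D (EFin \o g n).
  by move=> mD; exact: integrableS measurableT mD (@subsetT _ _) gint.
rewrite (negligible_integral mN0 mB (gint_on _ mB) PN0).
apply: (@le_trans _ _ (\int[P]_(w in B `\` N0) (cst c%:E) w)%E).
  apply: (@le_integral _ _ _ P _ mBN); first exact: gint_on.
    exact: finite_measure_integrable_cst.
  move=> w; rewrite inE => -[_ N0w]; rewrite /= lee_fin.
  have [[b bc gb]|nb] := pselect (exists2 b : R, b < c & forall n, g n w <= b).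
    exact: le_trans (gb n) (ltW bc).
  by have := gN0 w nb.
by rewrite integral_cst// lee_wpmul2l ?lee_fin// le_measure ?inE//; exact: subDsetl.
Qed.

Lemma rho_open_ball {R : realType} {T : Type} (rho : T -> T -> R) x r :
  is_metric rho -> rho_open rho [set y | rho x y < r].
Proof.
move=> [_ [_ [_ tri]]] y /= xy; exists (r - rho x y); first by rewrite subr_gt0.
by move=> z /= yz; have := tri x y z; lra.
Qed.

Lemma bounded_diam_ball {R : realType} {T : Type} (rho : T -> T -> R) x r :
  is_metric rho -> bounded_diam rho [set y | rho x y < r].
Proof.
move=> [_ [_ [rhoC tri]]]; exists (2 * r) => y z /= xy xz.
by have := tri y x z; rewrite (rhoC y x); lra.
Qed.

Lemma finite_measure_bigcap0_lt {R : realType} {d : measure_display} {T : measurableType d}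
    (nu : {measure set T -> \bar R}) (F : nat -> set T) :
  (nu setT < +oo)%E -> (forall k, measurable (F k)) -> nonincreasing_seq F ->
  \bigcap_k F k = set0 -> forall delta : R, 0 < delta -> exists k, (nu (F k) < delta%:E)%E.
Proof.
move=> nu_fin mF Fdec F0 delta delta_gt0.
have nuF k : nu (F k) \is a fin_num.
  by rewrite ge0_fin_numE// (le_lt_trans _ nu_fin)// le_measure ?inE.
have : (nu \o F @ \oo --> 0)%E.
  rewrite -(measure0 nu) -F0; apply: nonincreasing_cvg_mu => //.
    by rewrite (le_lt_trans _ nu_fin)// le_measure ?inE.
  exact: bigcapT_measurable.
move/fine_cvg/cvgr0_norm_lt/(_ _ delta_gt0) => [k _ /(_ k (leqnn k))].
by rewrite /= ger0_norm ?fine_ge0// -lte_fin fineK// => ?; exists k.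
Qed.

Section metric_measure.
Context {R : realType} {d : measure_display} {T : measurableType d}.
Context {rho : T -> T -> R}.
Hypothesis rho_metric : is_metric rho.
Hypothesis measurable_open : @measurable d T = <<s rho_open rho >>.

Lemma ball_measurable x r : measurable [set y | rho x y < r].
Proof. by rewrite measurable_open; apply: sub_gen_smallest; exact: rho_open_ball. Qed.

Lemma finite_measure_ball_compl_lt (nu : {measure set T -> \bar R}) x :
  (nu setT < +oo)%E -> forall delta : R, 0 < delta ->
  exists K : nat, (nu (~` [set y | (rho x y < K%:R)%R]) < delta%:E)%E.
Proof.
move=> nu_fin; apply: finite_measure_bigcap0_lt => //.
- by move=> k; exact/measurableC/ball_measurable.
- move=> m n mn; apply/subsetPset => y /=; apply: contra_not => y_m.
  by apply: lt_le_trans y_m _; rewrite ler_nat.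
- apply/seteqP; split => // y /(_ (Num.Def.archi_bound (rho x y)) I); apply.
  by apply: archi_boundP; case: rho_metric.
Qed.

End metric_measure.

Lemma nn_process_outside_le {R : realType} {T O : Type} {rho : T -> T -> R}
    {X Xt : nat -> O -> T} (x0 : T) (r : R) (w : O) :
  is_metric rho -> nn_process rho X Xt ->
  exists j, forall n, (0 < n)%N ->
    (asbool (~ (rho x0 (X n w) < 3 * r)%R \/ ~ (rho x0 (Xt n w) < 3 * r)%R) <=
     (w \in X n @^-1` ~` [set y | (rho x0 y < r)%R]) + (n <= j))%N.
Proof.
move=> [rho0 [_ [rhoC tri]]] nnX.
have [[j Bj]|noB] := pselect (exists j, rho x0 (X j w) < r); last first.
  exists 0%N => n _; rewrite mem_set; first exact: leq_trans (leq_b1 _) (leq_addr _ _).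
  by move=> Bn; apply: noB; exists n.
exists j => n n_gt0; have [nj|jn] := leqP n j.
  by rewrite /= addn1 (leq_trans (leq_b1 _)).
rewrite /= addn0; have [Bn|nBn] := pselect (rho x0 (X n w) < r); last first.
  by rewrite mem_set//; exact: leq_b1.
rewrite asboolF// => -[]; apply; first by have := rho0 x0 (X j w); lra.
have [_ /(_ j jn) nn_le] := nnX n w n_gt0.
have := tri x0 (X n w) (Xt n w); have := tri (X n w) x0 (X j w).
rewrite (rhoC (X n w) x0); lra.
Qed.

Lemma sum_le_indicator {bad hit : nat -> bool} {j : nat} (N : nat) :
  (forall n, (0 < n)%N -> (bad n <= hit n + (n <= j))%N) ->
  (\sum_(1 <= n < N.+1) bad n <= \sum_(n < N.+1) hit n + j.+1)%N.
Proof.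
move=> bad_le.
have count_le_j M : (\sum_(0 <= n < M) (n <= j))%N = minn M j.+1.
  elim: M => [|M IH]; first by rewrite big_geq.
  by rewrite big_nat_recr//= IH; case: (leqP M j) => Mj; lia.
apply: (@leq_trans (\sum_(1 <= n < N.+1) (hit n + (n <= j)))).
  rewrite big_nat_cond [leqRHS]big_nat_cond; apply: leq_sum => n.
  by move=> /andP[/andP[n_gt0 _] _]; exact: bad_le.
apply: (@leq_trans (\sum_(0 <= n < N.+1) (hit n + (n <= j)))).
  by rewrite [leqRHS]big_ltn// leq_addl.
by rewrite big_split /= big_mkord leq_add// count_le_j geq_minr.
Qed.

Lemma limn_esup_mean_le {R : realType} {bad hit : nat -> bool} {j : nat} (a : R) :
  0 < a -> (forall n, (0 < n)%N -> (bad n <= hit n + (n <= j))%N) ->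
  (\forall N \near \oo, (\sum_(n < N) hit n)%:R < a * N%:R) ->
  (limn_esup (fun N => ((N%:R)^-1 * \sum_(1 <= n < N.+1) (bad n)%:R)%:E) <= (2 * a)%:E)%E.
Proof.
move=> a_gt0 bad_le [M _ hit_lt]; apply: limn_esup_le_near.
pose N1 := Num.Def.archi_bound ((a + j.+1%:R) / a).
have N1_gt : (a + j.+1%:R) / a < N1%:R by apply: archi_boundP; rewrite divr_ge0// ?addr_ge0// ltW.
exists (maxn M N1) => // N /=; rewrite geq_max => /andP[MN N1N].
have N_gt : (a + j.+1%:R) / a < N%:R by apply: lt_le_trans N1_gt _; rewrite ler_nat.
have N_gt0 : 0 < N%:R :> R by apply: le_lt_trans N_gt; rewrite divr_ge0// ?addr_ge0// ltW.
have aN : a + j.+1%:R < a * N%:R by rewrite mulrC -ltr_pdivrMr.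
have := hit_lt N.+1 (leqW MN); rewrite /= -natr1 mulrDr mulr1 => hitN.
have := sum_le_indicator N bad_le; rewrite -(ler_nat R) natrD natr_sum => sum_le.
rewrite lee_fin ler_pdivrMl//; apply: le_trans sum_le _; rewrite [N%:R * _]mulrC -mulrA; lra.
Qed.

Theorem lemma7 (R : realType) (d : measure_display) (T : measurableType d)
  (rho : T -> T -> R) (nu : {measure set T -> \bar R})
  (dO : measure_display) (O : measurableType dO) (P : probability O R)
  (X : nat -> O -> T) (rate : R -> R) :
  is_metric rho ->
  (@measurable d T = <<s rho_open rho >>) ->
  (nu setT < +oo)%E ->
  (forall n, measurable_fun setT (X n)) ->
  unif_dominated_at_rate P X nu rate ->
  forall eps : R, 0 < eps ->
  exists X' : set T, bounded_diam rho X' /\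
    forall Xt : nat -> O -> T, nn_process rho X Xt ->
      {ae P, forall w,
        (limn_esup (fun N : nat =>
           ((N%:R)^-1 * \sum_(1 <= n < N.+1)
              (asbool (~ X' (X n w) \/ ~ X' (Xt n w)))%:R)%:E) < eps%:E)%E}.
Proof.
move=> rho_metric measurable_open nu_fin mX [dom _] eps eps_gt0.
pose x0 := X 0%N point; pose ball r := [set y | rho x0 y < r].
pose a := eps / 3; pose c := a / expR 1.
have a_gt0 : 0 < a by rewrite divr_gt0.
have c_gt0 : 0 < c by rewrite divr_gt0 // expR_gt0.
have ca : (expR 1 - 1) * c < a.
  by rewrite mulrBl mul1r mulrCA mulfV ?gt_eqF ?expR_gt0// mulr1 gtrBl.
have [delta delta_gt0 dom_delta] := dom c c_gt0.
have [K nuK] := finite_measure_ball_compl_lt rho_metric measurable_open nu x0 nu_fin _ delta_gt0.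
have mA : measurable (~` ball K%:R) := measurableC (ball_measurable rho_metric measurable_open _ _).
pose Y n := X n @^-1` ~` ball K%:R.
have Y_cond n B : past_sigma X n B -> (P (Y n `&` B) <= c%:E * P B)%E.
  move=> pB; apply: (sup_cond_prob_lt_le (ltW c_gt0) (dom_delta _ mA nuK) pB).
  exact: past_sigma_measurable mX _ pB.
have := @hits_eventually_lt _ _ _ P _ Y c (ltW c_gt0)
  (fun n => past_sigma_measurable X n mX) (past_sigma_mono X)
  (fun n => past_sigma_preimage X n _ mA) Y_cond _ ca.
move=> hits_lt; exists (ball (3 * K%:R)); split; first exact: bounded_diam_ball.
move=> Xt nnX; apply: filterS hits_lt => w w_hits_lt.
have [j bad_le] := nn_process_outside_le x0 K%:R w rho_metric nnX.
apply: le_lt_trans (limn_esup_mean_le a a_gt0 bad_le w_hits_lt) _.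
by rewrite lte_fin /a; lra.
Qed.
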